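(* For the propositional CNF formula $MAP_n^1$ (defined in the context), every DPLL refutation of $MAP_n^1$ has size exponential in $n$.
   Context: MAP planning domain. Fix $n\ge 2$. The map is an undirected graph with $3n-3$ nodes: a centre $L^0$; a path (branch 1) $L^0 - L_1^1 - \dots - L_1^{2n-3}$; and, for each $i=2,\dots,n$, a single node $L_i^1$ adjacent to $L^0$. Facts are $at\text{-}x$ and $visited\text{-}x$. For every edge $\{x,y\}$ and both orientations there is an action $move\text{-}x\text{-}y$ with precondition $\{at\text{-}x\}$, add effects $\{at\text{-}y, visited\text{-}y\}$, delete effect $\{at\text{-}x\}$. The initial state is $\{at\text{-}L^0\}$. The goal of $MAP_n^1$ is $\{visited\text{-}L_1^1,\dots,visited\text{-}L_n^1\}$. The CNF formula $MAP_n^1$ is the standard Graphplan-based (Blackbox-style) SAT encoding of this task with $T=2n-2$ time steps (unsatisfiable, since a shortest plan has $2n-1$ steps). Build the Graphplan planning graph from the initial state, with a NOOP action $NOOP\text{-}p$ (precondition and add effect $\{p\}$) for each fact $p$. For each $t=1,\dots,T$ there is a variable $a(t)$ for every action $a$ (including NOOPs) in action layer $t$. Clauses: goal clauses $\{a(T): g\in add(a)\}$ for each goal $g$; precondition clauses $\{\neg a(t)\}\cup\{a'(t-1): p\in add(a')\}$ for each $a(t)$, $t\ge 2$, $p\in pre(a)$; mutex clauses $\{\neg a(t),\neg a'(t)\}$ for pairs of actions Graphplan marks mutually exclusive at layer $t$ (interference or competing needs); in particular any two move actions at the same step are mutually exclusive. A DPLL refutation is a search tree of the Davis–Putnam–Logemann–Loveland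 procedure (branching on variables, with unit propagation) in which every leaf yields an empty clause; its size is the number of nodes. *)

From HB Require Import structures.
From mathcomp Require Import all_boot.

Set Implicit Arguments.
Unset Strict Implicit.
Unset Printing Implicit Defensive.

Section Graphplan.
Variables (F A : eqType).
(* all ground actions, INCLUDING the NOOPs *)
Variable acts : seq A.
Variables (pre add del : A -> seq F).
Variable init : seq F.

Definition interferes (a b : A) : bool :=
  has (fun p => (p \in pre b) || (p \in add b)) (del a) ||
  has (fun p => (p \in pre a) || (p \in add a)) (del b).

Definition act_layer (Fs : seq F) (fm : rel F) : seq A :=
  [seq a <- acts | all (fun p => p \in Fs) (pre a) &&
                   all (fun p => all (fun q => ~~ fm p q) (pre a)) (pre a)].

(* action mutex (interference or competing needs), fm = fact mutex of the
   preceding fact layer *)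
Definition amutex (fm : rel F) (a b : A) : bool :=
  (a != b) &&
  (interferes a b || has (fun p => has (fun q => fm p q) (pre b)) (pre a)).

Definition fact_layer (As : seq A) : seq F := undup (flatten (map add As)).

Definition fmutex_next (As : seq A) (fm : rel F) : rel F :=
  fun p q => [&& p != q, p \in fact_layer As, q \in fact_layer As &
     all (fun a => (p \in add a) ==>
          all (fun b => (q \in add b) ==> amutex fm a b) As) As].

Fixpoint layer (t : nat) : seq F * rel F :=
  match t with
  | 0 => (init, fun _ _ => false)
  | t'.+1 => let: (Fs, fm) := layer t' in
             let As := act_layer Fs fm in (fact_layer As, fmutex_next As fm)
  end.

(* action layer t (t >= 1) and its mutex relation *)
Definition actions_at (t : nat) : seq A := act_layer (layer t.-1).1 (layer t.-1).2.
Definition amutex_at (t : nat) (a b : A) : bool := amutex (layer t.-1).2 a b.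

Definition gvar := (A * nat)%type.
Definition glit := (gvar * bool)%type.

Variable goals : seq F.
Variable T : nat.

Definition goal_clauses : seq (seq glit) :=
  [seq [seq ((a, T), true) | a <- actions_at T & g \in add a] | g <- goals].

Definition pre_clauses : seq (seq glit) :=
  flatten [seq flatten [seq [seq ((a, t), false) ::
                 [seq ((a', t.-1), true) | a' <- actions_at t.-1 & p \in add a']
               | p <- pre a] | a <- actions_at t] | t <- iota 2 T.-1].

Definition mutex_clauses : seq (seq glit) :=
  flatten [seq flatten [seq [seq [:: ((a, t), false); ((b, t), false)]
               | b <- actions_at t & amutex_at t a b] | a <- actions_at t]
          | t <- iota 1 T].

Definition graphplan_cnf : seq (seq glit) :=
  goal_clauses ++ pre_clauses ++ mutex_clauses.

End Graphplan.

Section DPLL.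
Variable V : eqType.
Definition lit := (V * bool)%type.          (* (x, true) = x, (x, false) = ~x *)
Definition clause := seq lit.
Definition cnf := seq clause.
Definition passign := seq lit.               (* set of literals made true *)

Variable phi : cnf.

Definition lit_true (rho : passign) (l : lit) : bool := l \in rho.
Definition lit_false (rho : passign) (l : lit) : bool := (l.1, ~~ l.2) \in rho.
Definition clause_sat (rho : passign) (C : clause) : bool := has (lit_true rho) C.
Definition clause_falsified (rho : passign) (C : clause) : bool := all (lit_false rho) C.

Definition unit_lit (rho : passign) (C : clause) : option lit :=
  if clause_sat rho C then None else
  match undup [seq l <- C | ~~ lit_false rho l] with
  | [:: l] => Some l
  | _ => None
  end.

Definition up_step (rho : passign) : passign :=
  match ohead (pmap (unit_lit rho) phi) with
  | Some l => l :: rho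
  | None => rho
  end.

(* unit propagation to a fixpoint (each step satisfies a new clause, so
   size phi steps suffice) *)
Definition propagate (rho : passign) : passign := iter (size phi) up_step rho.

Definition conflict (rho : passign) : bool := has (clause_falsified rho) phi.
Definition assigned (rho : passign) (v : V) : bool := ((v, true) \in rho) || ((v, false) \in rho).
Definition vars : seq V := flatten [seq [seq l.1 | l <- C] | C <- phi].

Inductive dtree := DLeaf | DNode of V & dtree & dtree.

Fixpoint dsize (t : dtree) : nat :=
  match t with DLeaf => 1 | DNode _ t0 t1 => (dsize t0 + dsize t1).+1 end.

Fixpoint dpll_ref (rho : passign) (t : dtree) : bool :=
  let rho' := propagate rho in
  match t with
  | DLeaf => conflict rho'
  | DNode v t0 t1 =>
      [&& ~~ conflict rho', v \in vars, ~~ assigned rho' v,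
          dpll_ref ((v, false) :: rho') t0 & dpll_ref ((v, true) :: rho') t1]
  end.

Definition DPLL_refutation (t : dtree) : bool := dpll_ref [::] t.

End DPLL.

(* Ctr = L^0 ; Br1 k = L_1^k (1 <= k <= 2n-3) ; Lf i = L_i^1 (2 <= i <= n) *)
Inductive node := Ctr | Br1 of nat | Lf of nat.
Definition node_dec : comparable node. Proof. rewrite /comparable /decidable; decide equality; decide equality. Defined.
HB.instance Definition _ := comparableMixin node_dec.

Inductive fact := At of node | Visited of node.
Definition fact_dec : comparable fact. Proof. rewrite /comparable /decidable; decide equality; apply: node_dec. Defined.
HB.instance Definition _ := comparableMixin fact_dec.

Inductive action := Move of node & node | Noop of fact.
Definition action_dec : comparable action.
Proof. rewrite /comparable /decidable; decide equality; (apply: node_dec || apply: fact_dec). Defined.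
HB.instance Definition _ := comparableMixin action_dec.

Definition map_nodes (n : nat) : seq node :=
  Ctr :: [seq Br1 k | k <- iota 1 (2 * n - 3)] ++ [seq Lf i | i <- iota 2 (n - 1)].

(* undirected edges, given one orientation *)
Definition edge1 (n : nat) (x y : node) : bool :=
  match x, y with
  | Ctr, Br1 1 => true
  | Br1 k, Br1 k' => (k' == k.+1) && (1 <= k) && (k' <= 2 * n - 3)
  | Ctr, Lf i => (2 <= i) && (i <= n)
  | _, _ => false
  end.
Definition adj (n : nat) (x y : node) : bool := edge1 n x y || edge1 n y x.

Definition map_facts (n : nat) : seq fact :=
  [seq At x | x <- map_nodes n] ++ [seq Visited x | x <- map_nodes n].

Definition map_acts (n : nat) : seq action :=
  [seq Move p.1 p.2 | p <- [seq (x, y) | x <- map_nodes n, y <- map_nodes n]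
                    & adj n p.1 p.2]
  ++ [seq Noop f | f <- map_facts n].

Definition map_pre (a : action) : seq fact :=
  match a with Move x _ => [:: At x] | Noop p => [:: p] end.
Definition map_add (a : action) : seq fact :=
  match a with Move _ y => [:: At y; Visited y] | Noop p => [:: p] end.
Definition map_del (a : action) : seq fact :=
  match a with Move x _ => [:: At x] | Noop _ => [::] end.

Definition map_goals (n : nat) : seq fact :=
  Visited (Br1 1) :: [seq Visited (Lf i) | i <- iota 2 (n - 1)].

Definition MAP1 (n : nat) : seq (seq ((action * nat) * bool)) :=
  graphplan_cnf (map_acts n) map_pre map_add map_del [:: At Ctr]
                (map_goals n) (2 * n - 2).

From mathcomp Require Import all_boot zify.

Set Implicit Arguments.
Unset Strict Implicit.
Unset Printing Implicit Defensive.

(* Prover-Delayer argument.  Group the 2n-2 steps into the n-1 slots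
   {2j-1, 2j}; during a slot the walk either stays at L^0 or makes the
   excursion L^0 -> g -> L^0 to one goal g.  The Delayer keeps a partial
   injective assignment of excursions to slots and answers every variable
   according to it, imagining each goal without a slot to be visited in some
   free slot; it commits a new slot only when the answer is not yet forced,
   and then the Prover may choose the answer.  Along any walk through the
   star formed by L^0 and its neighbours the actions form a plan, hence they
   lie in the planning graph and are pairwise non-mutex; so while two slots
   are free every clause keeps a literal that the Delayer does not falsify.
   Unit propagation is therefore harmless, each unforced branching costs one
   slot, and the search tree contains a complete binary tree of depth n-3. *)

(** * Delayer lower bound for DPLL *)

Section UnitPropagation.
Variables (V : eqType) (phi : cnf V).

Lemma unit_litP (rho : passign V) (C : clause V) (l : lit V) :
  unit_lit rho C = Some l ->
  [/\ l \in C, ~~ assigned rho l.1 & {in C, forall l', l' != l -> lit_false rho l'}].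
Proof.
rewrite /unit_lit; case: ifP => // C_unsat.
case E: undup => [|l0 [|? ?]] // [<-].
have /[!(mem_undup, mem_filter)] /andP [l0_nf l0C] :
    l0 \in undup [seq l <- C | ~~ lit_false rho l] by rewrite E mem_head.
split=> // [|l' l'C l'_ne].
- have /hasPn /(_ l0 l0C) l0_nt := negbT C_unsat.
  move: l0_nf l0_nt; rewrite /assigned /lit_false /lit_true.
  by case: l0 {E l0C} => v [] /= /negPf -> /negPf ->.
- apply: contraNT l'_ne => l'_nf.
  have : l' \in undup [seq l <- C | ~~ lit_false rho l] by rewrite mem_undup mem_filter l'_nf.
  by rewrite E inE.
Qed.

Lemma unit_lit_flip_conflict (rho : passign V) (C : clause V) (l : lit V) :
  C \in phi -> unit_lit rho C = Some l -> conflict phi ((l.1, ~~ l.2) :: rho).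
Proof.
move=> Cphi /unit_litP [_ _ l_only]; apply/hasP; exists C => //.
apply/allP => l' l'C; rewrite {1}/lit_false inE.
have [-> | l'_ne] := eqVneq l' l; first by rewrite eqxx.
by rewrite [_ \in rho](l_only l') ?orbT.
Qed.

Lemma up_stepP (rho : passign V) :
  up_step phi rho = rho \/
  exists2 l, up_step phi rho = l :: rho & [/\ ~~ assigned rho l.1 &
     conflict phi ((l.1, ~~ l.2) :: rho)].
Proof.
rewrite /up_step; case E: ohead => [l|]; [right; exists l => // | by left].
have /mapP [C Cphi /esym Cl] : Some l \in map (unit_lit rho) phi.
  by rewrite -mem_pmap; move: E; case: pmap => //= ? ? [->]; exact: mem_head.
by split; [case/unit_litP: Cl | exact: unit_lit_flip_conflict Cl].
Qed.

End UnitPropagation.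

Section DelayerLowerBound.
(* [Good rho k]: at assignment rho the Delayer can still force k branchings. *)
Variables (V : eqType) (phi : cnf V) (Good : passign V -> nat -> Prop).

Hypothesis no_conflict : forall rho k, Good rho k.+1 -> ~~ conflict phi rho.
Hypothesis branch : forall rho k v, Good rho k.+1 -> ~~ assigned rho v ->
  (exists b, Good ((v, b) :: rho) k.+1) \/ (forall b, Good ((v, b) :: rho) k).

Lemma up_step_Good rho k : Good rho k.+2 -> Good (up_step phi rho) k.+2.
Proof.
move=> G; case: (up_stepP phi rho) => [-> // | [l -> [l_free flip_conf]]].
have flipNGood k' : ~ Good ((l.1, ~~ l.2) :: rho) k'.+1.
  by move/no_conflict; rewrite flip_conf.
case: (branch G l_free) => [[b Gb] | Gall]; last by case: (flipNGood k); apply: Gall.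
have [Eb | Nb] := eqVneq b l.2; first by rewrite Eb -surjective_pairing in Gb.
have {Nb}Eb : b = ~~ l.2 by case: b Nb {Gb}; case: (l.2).
by move: Gb; rewrite Eb => /flipNGood.
Qed.

Lemma propagate_Good rho k : Good rho k.+2 -> Good (propagate phi rho) k.+2.
Proof. by rewrite /propagate; elim: (size phi) => //= m IHm /IHm /up_step_Good. Qed.

Lemma dpll_ref_Good_size t rho k :
  Good rho k.+1 -> dpll_ref phi rho t -> 2 ^ k <= dsize t.
Proof.
elim: t rho k => [|v t0 IH0 t1 IH1] rho [|k] G //=.
  by move/no_conflict: (propagate_Good G) => /negPf ->.
case/and5P => _ _ v_free ref0 ref1.
case: (branch (propagate_Good G) v_free) => [[[] Gb] | Gall].
- by have := IH1 _ _ Gb ref1; lia.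
- by have := IH0 _ _ Gb ref0; lia.
- have := IH0 _ _ (Gall false) ref0; have := IH1 _ _ (Gall true) ref1.
  rewrite expnS; lia.
Qed.

End DelayerLowerBound.

(** * Plans lie in the planning graph *)

Section PlanLayers.
Variables (F A : eqType) (acts : seq A) (pre add del : A -> seq F) (init : seq F).
Variable plan : nat -> seq A.

Hypothesis plan_acts : forall t, {subset plan t.+1 <= acts}.
Hypothesis plan_pre_init : forall a p, a \in plan 1 -> p \in pre a -> p \in init.
Hypothesis plan_pre_achieved : forall t a p, a \in plan t.+2 -> p \in pre a ->
  exists2 a', a' \in plan t.+1 & p \in add a'.
Hypothesis plan_noninterfering : forall t a b, a \in plan t.+1 -> b \in plan t.+1 ->
  a != b -> ~~ interferes pre add del a b.

Definition achieved t p :=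
  if t is t'.+1 then has (fun a => p \in add a) (plan t) else p \in init.

Local Notation layer := (layer acts pre add del init).

Lemma achieved_pre t a p : a \in plan t.+1 -> p \in pre a -> achieved t p.
Proof.
case: t => [|t] a_plan p_pre; first exact: plan_pre_init a_plan p_pre.
by have [a' a'_plan p_add] := plan_pre_achieved a_plan p_pre; apply/hasP; exists a'.
Qed.

Definition layer_admits t :=
  (forall p, achieved t p -> p \in (layer t).1) /\
  (forall p q, achieved t p -> achieved t q -> ~~ (layer t).2 p q).

Lemma plan_act_layer t : layer_admits t ->
  {subset plan t.+1 <= act_layer acts pre (layer t).1 (layer t).2} /\
  {in plan t.+1 &, forall a b, ~~ amutex pre add del (layer t).2 a b}.
Proof.
case=> in_layer nonmutex; split=> [a a_plan | a b a_plan b_plan].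
  rewrite mem_filter (plan_acts a_plan) andbT; apply/andP; split.
    by apply/allP => p /(achieved_pre a_plan) /in_layer.
  apply/allP => p /(achieved_pre a_plan) Ap; apply/allP => q /(achieved_pre a_plan).
  exact: nonmutex.
rewrite /amutex; have [//|a_ne_b] := eqVneq a b.
rewrite /= negb_or (plan_noninterfering a_plan b_plan a_ne_b) /=.
apply/hasPn => p /(achieved_pre a_plan) Ap; apply/hasPn => q /(achieved_pre b_plan).
exact: nonmutex.
Qed.

Lemma layer_admits_all t : layer_admits t.
Proof.
elim: t => [|t IHt]; first by [].
have [in_act nonmutex] := plan_act_layer IHt.
rewrite /layer_admits /=.
case: (layer t) in_act nonmutex => Fs fm /= in_act nonmutex.
split=> [p /hasP [a a_plan p_add] | p q /hasP [a a_plan p_add] /hasP [b b_plan q_add]].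
  by rewrite mem_undup; apply/flatten_mapP; exists a; rewrite ?in_act.
apply/negP => /and4P [_ _ _ /allP /(_ a (in_act _ a_plan))].
rewrite p_add => /allP /(_ b (in_act _ b_plan)).
by rewrite q_add /= (negPf (nonmutex _ _ a_plan b_plan)).
Qed.

Lemma plan_in_graph t : {subset plan t.+1 <= actions_at acts pre add del init t.+1} /\
  {in plan t.+1 &, forall a b, ~~ amutex_at acts pre add del init t.+1 a b}.
Proof. exact: plan_act_layer (layer_admits_all t). Qed.

End PlanLayers.

Lemma interferesC (F A : eqType) (pre add del : A -> seq F) a b :
  interferes pre add del a b = interferes pre add del b a.
Proof. exact: orbC. Qed.

(** * Walks in the MAP graph *)

Definition is_goal n (x : node) :=
  match x with Br1 k => k == 1 | Lf i => (2 <= i) && (i <= n) | Ctr => false end.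

Definition star_node n x := (x == Ctr) || is_goal n x.

Lemma goal_neq_Ctr n x : is_goal n x -> x != Ctr.
Proof. by case: x. Qed.

Lemma star_Ctr n : star_node n Ctr.
Proof. by rewrite /star_node eqxx. Qed.

Lemma goal_star n x : is_goal n x -> star_node n x.
Proof. by rewrite /star_node => ->; rewrite orbT. Qed.

Lemma star_node_map n x : 2 <= n -> star_node n x -> x \in map_nodes n.
Proof.
move=> n2; case/orP => [/eqP -> | ]; first exact: mem_head.
case: x => [|k|i] //= x_goal; rewrite in_cons mem_cat; apply/orP; right; apply/orP.
  by left; move/eqP: x_goal => ->; apply: map_f; rewrite mem_iota; lia.
by right; apply: map_f; rewrite mem_iota; lia.
Qed.

Lemma star_node_step n x : star_node n x ->
  ((Ctr == x) || adj n Ctr x) && ((x == Ctr) || adj n x Ctr).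
Proof.
case/orP => [/eqP -> | ]; first by rewrite eqxx.
by case: x => [|k|i] //= => [/eqP -> | i_goal]; rewrite /adj /= ?i_goal ?orbT.
Qed.

Lemma move_in_map_acts n x y : x \in map_nodes n -> y \in map_nodes n -> adj n x y ->
  Move x y \in map_acts n.
Proof.
move=> x_node y_node xy; rewrite mem_cat; apply/orP; left.
by apply/mapP; exists (x, y); rewrite // mem_filter xy; apply/allpairsP; exists (x, y).
Qed.

Lemma noop_in_map_acts n x : x \in map_nodes n ->
  (Noop (At x) \in map_acts n) && (Noop (Visited x) \in map_acts n).
Proof.
move=> x_node; rewrite !mem_cat; apply/andP; split; apply/orP; right; apply: map_f;
  by rewrite mem_cat map_f ?orbT.
Qed.

Lemma noop_visited_noninterfering y b :
  ~~ interferes map_pre map_add map_del (Noop (Visited y)) b.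
Proof. by apply/hasPn; case: b => [x z|f] //= p; rewrite inE => /eqP ->. Qed.

Definition goal_nodes n := Br1 1 :: [seq Lf i | i <- iota 2 n.-1].

Lemma Lf_inj : injective Lf. Proof. by move=> ? ? []. Qed.

Lemma mem_goal_nodes n y : (y \in goal_nodes n) = is_goal n y.
Proof.
case: y => [|k|i]; rewrite inE /=; first by apply/negbTE/mapP => -[].
  have /negbTE -> : Br1 k \notin [seq Lf i | i <- iota 2 n.-1] by apply/mapP => -[].
  by rewrite orbF; apply/eqP/eqP => [[] | ->].
by rewrite (mem_map Lf_inj) mem_iota; lia.
Qed.

Lemma goal_nodes_uniq n : uniq (goal_nodes n).
Proof.
rewrite /= (map_inj_uniq Lf_inj).
by rewrite iota_uniq andbT; apply/mapP => -[].
Qed.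

Lemma size_goal_nodes n : size (goal_nodes n) = n.-1.+1.
Proof. by rewrite /= size_map size_iota. Qed.

Lemma map_goalsE n : map_goals n = [seq Visited y | y <- goal_nodes n].
Proof. by rewrite /map_goals /= -map_comp subn1. Qed.

Local Notation acts_at n := (actions_at (map_acts n) map_pre map_add map_del [:: At Ctr]).
Local Notation mutex_at n := (amutex_at (map_acts n) map_pre map_add map_del [:: At Ctr]).

Definition map_walk n (w : nat -> node) := [/\ w 0 = Ctr, forall s, w s \in map_nodes n &
  forall s, (w s == w s.+1) || adj n (w s) (w s.+1)].

Definition walk_action (w : nat -> node) t :=
  if w t.-1 == w t then Noop (At (w t)) else Move (w t.-1) (w t).

Definition walk_entered (w : nat -> node) t := [seq w s | s <- iota 1 t.-1 & w s.-1 != w s].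

Definition walk_plan w t := walk_action w t :: [seq Noop (Visited y) | y <- walk_entered w t].

Lemma walk_planP w t a : a \in walk_plan w t ->
  a = walk_action w t \/
  exists2 s, [&& 1 <= s, s < t & w s.-1 != w s] & a = Noop (Visited (w s)).
Proof.
rewrite inE => /predU1P [-> | /mapP [_ /mapP [s s_in ->] ->]]; [by left | right].
move: s_in; rewrite mem_filter mem_iota => /and3P [ws s1 st].
by exists s => //; rewrite ws andbT; lia.
Qed.

Lemma walk_plan_visit w t s : 1 <= s < t -> w s.-1 != w s ->
  Noop (Visited (w s)) \in walk_plan w t.
Proof.
move=> st ws; rewrite inE; apply/orP; right; do 2 apply: map_f.
by rewrite mem_filter ws mem_iota; lia.
Qed.

Section WalkPlan.
Variables (n : nat) (w : nat -> node).
Hypothesis w_walk : map_walk n w.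

Lemma walk_plan_acts t : {subset walk_plan w t.+1 <= map_acts n}.
Proof.
case: w_walk => _ w_node w_step a /walk_planP [-> | [s _ ->]].
  rewrite /walk_action; case: eqP => [_ | ww].
    by case/andP: (noop_in_map_acts (w_node t.+1)).
  by apply: move_in_map_acts; move: (w_step t); case: eqP.
by case/andP: (noop_in_map_acts (w_node s)).
Qed.

Lemma walk_plan_pre_init a p : a \in walk_plan w 1 -> p \in map_pre a -> p \in [:: At Ctr].
Proof.
case: w_walk => w0 _ _ /walk_planP [-> | [s /and3P [s1 s_lt _] _]]; last by lia.
by rewrite /walk_action /= w0; case: eqP => [<- | _].
Qed.

Lemma walk_plan_pre_achieved t a p : a \in walk_plan w t.+2 -> p \in map_pre a ->
  exists2 a', a' \in walk_plan w t.+1 & p \in map_add a'.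
Proof.
case/walk_planP => [-> | [s /and3P [s1 s_lt ws] ->]].
  have pre_at : p \in map_pre (walk_action w t.+2) -> p = At (w t.+1).
    by rewrite /walk_action /=; case: eqP => [<- | _]; rewrite inE => /eqP.
  move=> /pre_at ->; exists (walk_action w t.+1); first exact: mem_head.
  by rewrite /walk_action; case: eqP => _; rewrite !inE eqxx ?orbT.
rewrite inE => /eqP ->; case: (eqVneq s t.+1) ws => [-> /= ws | s_ne ws].
  exists (walk_action w t.+1); first exact: mem_head.
  by rewrite /walk_action (negPf ws) !inE eqxx orbT.
exists (Noop (Visited (w s))); last exact: mem_head.
by apply: walk_plan_visit => //; lia.
Qed.

Lemma walk_plan_noninterfering t a b : a \in walk_plan w t.+1 -> b \in walk_plan w t.+1 ->
  a != b -> ~~ interferes map_pre map_add map_del a b.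
Proof.
case/walk_planP => [-> | [s _ ->]]; last by rewrite noop_visited_noninterfering.
case/walk_planP => [-> | [s _ ->]]; first by rewrite eqxx.
by rewrite interferesC noop_visited_noninterfering.
Qed.

Lemma walk_plan_in_graph t :
  {subset walk_plan w t.+1 <= acts_at n t.+1} /\
  {in walk_plan w t.+1 &, forall a b, ~~ mutex_at n t.+1 a b}.
Proof.
exact: plan_in_graph walk_plan_acts walk_plan_pre_init walk_plan_pre_achieved
  walk_plan_noninterfering t.
Qed.

End WalkPlan.

Definition tour (x g : node) (f : nat) (s : nat) : node :=
  if s == f then g else if s == 1 then x else Ctr.

Lemma tour_walk n x g f : 2 <= n -> star_node n x -> star_node n g ->
  1 <= f -> (x == Ctr) || (3 <= f) -> map_walk n (tour x g f).
Proof.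
move=> n2 x_star g_star f1 x_f.
have tour_star s : star_node n (tour x g f s).
  by rewrite /tour; case: eqP => _ //; case: eqP => _ //; rewrite /star_node eqxx.
have tour_ctr s : s != f -> (s != 1) || (x == Ctr) -> tour x g f s = Ctr.
  by rewrite /tour => /negPf -> /orP [/negPf -> | /eqP ->] //; case: ifP.
have ctr_step s : (tour x g f s == Ctr) || (tour x g f s.+1 == Ctr).
  case/orP: x_f => [xC | f3].
    apply/orP; case: (eqVneq s f) => sf; [right | left];
      by apply/eqP/tour_ctr; rewrite ?xC ?orbT //; lia.
  apply/orP; case: (boolP ((s != f) && (s != 1))) => [/andP [sf s1] | s_special];
    [left | right]; by apply/eqP/tour_ctr; rewrite ?s1 //; lia.
split=> [|s|s]; first by rewrite /tour ifN_eq //; lia.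
  exact: star_node_map.
by case/orP: (ctr_step s) => /eqP ->; [case/andP: (star_node_step (tour_star s.+1)) |
  case/andP: (star_node_step (tour_star s))].
Qed.

Definition opt_goal n (o : option node) := if o is Some g then is_goal n g else true.

Lemma opt_goal_star n o : opt_goal n o -> star_node n (odflt Ctr o).
Proof. by case: o => [g /= g_goal | _]; rewrite /star_node ?g_goal ?orbT ?eqxx. Qed.

Definition slot_action t (o : option node) :=
  match o with
  | Some g => if odd t then Move Ctr g else Move g Ctr
  | None => Noop (At Ctr)
  end.

Definition slot_start t := if odd t then t else t.-1.

Lemma walk_action_tour n x o t : opt_goal n o -> 1 <= t ->
  walk_action (tour x (odflt Ctr o) (slot_start t)) t = slot_action t o.
Proof.
move=> o_goal t1; rewrite /walk_action /tour /slot_start.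
have tN1 : (t.-1 == t) = false by apply/negbTE; lia.
have tN2 : (t == t.-1) = false by apply/negbTE; lia.
case t_odd: (odd t); rewrite eqxx ?tN1 ?tN2.
  have -> : (t.-1 == 1) = false.
    by apply/negbTE/eqP => t2; move: t_odd; rewrite -(prednK t1) t2.
  by case: o o_goal => [g /goal_neq_Ctr gC|_] /=; rewrite ?t_odd ?eqxx // eq_sym (negPf gC).
have -> : (t == 1) = false by apply/negbTE/eqP => t_1; rewrite t_1 in t_odd.
by case: o o_goal => [g /goal_neq_Ctr gC|_] /=; rewrite ?t_odd ?eqxx // (negPf gC).
Qed.

Lemma slot_action_pre_add t o o' : 0 < t -> odd t || (o' == o) ->
  {subset map_pre (slot_action t o) <= map_add (slot_action t.-1 o')}.
Proof.
case: t => // t _ /= cond p.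
case: o o' cond => [g|] [g'|] /=; case: (odd t) => /= cond; rewrite !inE => /eqP -> //;
  by move: cond; rewrite ?eqxx // => /eqP [->]; rewrite eqxx.
Qed.

Lemma slot_start_ge t k : k <= t -> odd k -> k <= slot_start t.
Proof.
rewrite /slot_start; case: ifP => // t_even kt k_odd.
by case: (eqVneq k t) => [k_t | ]; [rewrite k_t t_even in k_odd | lia].
Qed.

Lemma walk_plan_nonmutex n w t a b : map_walk n w -> 1 <= t ->
  a \in walk_plan w t -> b \in walk_plan w t -> ~~ mutex_at n t a b.
Proof. by case: t => // t w_walk _; case: (walk_plan_in_graph w_walk t) => _; apply. Qed.

Lemma slot_action_in_graph n t o : 2 <= n -> 1 <= t -> opt_goal n o ->
  slot_action t o \in acts_at n t.
Proof.
case: t => // t n2 _ o_goal.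
have f1 : 1 <= slot_start t.+1 by apply: slot_start_ge.
have w_walk := tour_walk n2 (star_Ctr n) (opt_goal_star o_goal) f1 (orTb _).
case: (walk_plan_in_graph w_walk t) => in_graph _; apply: in_graph.
by rewrite -(walk_action_tour Ctr o_goal) ?mem_head.
Qed.

Lemma visit_noop_in_graph n t h : 2 <= n -> 2 <= t -> is_goal n h ->
  Noop (Visited h) \in acts_at n t.
Proof.
case: t => // t n2 t2 h_goal.
have w_walk := tour_walk n2 (star_Ctr n) (goal_star h_goal) (leqnn 1) (orTb _).
case: (walk_plan_in_graph w_walk t) => in_graph _; apply: in_graph.
by have := @walk_plan_visit (tour Ctr h 1) t.+1 1; rewrite /tour /=; apply;
  rewrite // eq_sym (goal_neq_Ctr h_goal).
Qed.

Lemma slot_visit_nonmutex n t o h : 2 <= n -> 2 <= t -> is_goal n h -> opt_goal n o ->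
  (3 <= t) || (o == Some h) ->
  ~~ mutex_at n t (slot_action t o) (Noop (Visited h)) /\
  ~~ mutex_at n t (Noop (Visited h)) (slot_action t o).
Proof.
move=> n2 t2 h_goal o_goal t_o.
have act_in x : slot_action t o \in walk_plan (tour x (odflt Ctr o) (slot_start t)) t.
  by rewrite -(walk_action_tour x o_goal) ?mem_head //; lia.
have visit_in x : tour x (odflt Ctr o) (slot_start t) 1 = h ->
    Noop (Visited h) \in walk_plan (tour x (odflt Ctr o) (slot_start t)) t.
  move=> w1; rewrite -{1}w1; apply: walk_plan_visit; first lia.
  rewrite w1 /tour /= ifN_eq; first by rewrite eq_sym (goal_neq_Ctr h_goal).
  by rewrite eq_sym -lt0n slot_start_ge //; lia.
(* For t = 2 the slot of h is the slot of t itself. *)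
have [w_walk w1] : map_walk n (tour (if 3 <= t then h else Ctr) (odflt Ctr o) (slot_start t))
    /\ tour (if 3 <= t then h else Ctr) (odflt Ctr o) (slot_start t) 1 = h.
  case: (leqP 3 t) t_o => [t3 _ | t_lt3 /eqP o_h].
    have f3 : 3 <= slot_start t by apply: slot_start_ge.
    split; last by rewrite /tour ifN_eq //; lia.
    apply: (tour_walk n2 (goal_star h_goal) (opt_goal_star o_goal)); lia.
  have -> : t = 2 by lia.
  by rewrite o_h /=; split; first apply: (tour_walk n2 (star_Ctr n) (goal_star h_goal)).
by split; apply: walk_plan_nonmutex w_walk _ _ _; rewrite ?act_in ?visit_in //; lia.
Qed.

Lemma visit_visit_nonmutex n t h h' : 2 <= n -> 4 <= t -> is_goal n h -> is_goal n h' ->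
  ~~ mutex_at n t (Noop (Visited h)) (Noop (Visited h')).
Proof.
move=> n2 t4 h_goal h'_goal.
have w_walk := tour_walk n2 (goal_star h_goal) (goal_star h'_goal) (isT : 1 <= 3) (orbT _).
apply: walk_plan_nonmutex w_walk _ _ _; first lia.
  have := @walk_plan_visit (tour h h' 3) t 1; rewrite /tour /=; apply; first lia.
  by rewrite eq_sym (goal_neq_Ctr h_goal).
have := @walk_plan_visit (tour h h' 3) t 3; rewrite /tour /=; apply; first lia.
by rewrite eq_sym (goal_neq_Ctr h'_goal).
Qed.

(** * Delayer states *)

(* [S j = Some (Some g)]: slot j is the excursion to g; [S j = Some None]: the
   walk stays at L^0 during slot j; [S j = None]: slot j is free. *)
Definition state := nat -> option (option node).

Definition assign (S : state) j o : state := fun i => if i == j then Some o else S i.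

Definition free_slots n (S : state) := [seq j <- iota 1 n.-1 | S j == None].

Definition goal_slot n (S : state) y := ohead [seq j <- iota 1 n.-1 | S j == Some (Some y)].

Definition matched n S y := goal_slot n S y != None.

Definition wf_state n (S : state) :=
  [/\ forall j, S j != None -> 0 < j < n,
      forall j o, S j = Some o -> opt_goal n o &
      forall i j y, S i = Some (Some y) -> S j = Some (Some y) -> i = j].

Definition fresh n (S : state) o := if o is Some y then is_goal n y && ~~ matched n S y else true.

Definition slot_val n (S : state) j o : option bool :=
  if S j is Some o' then Some (o == o')
  else if o is Some y then (if matched n S y then Some false else None) else None.

(* A goal without a slot will be visited in one of the free slots, so whether
   it is visited by step t is only known when all free slots end on the same
   side of t. *)
Definition visited_val n (S : state) y t : option bool :=
  if goal_slot n S y is Some j then Some (j.*2 <= t)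
  else if all (fun j => t < j.*2) (free_slots n S) then Some false
  else if all (fun j => j.*2 <= t) (free_slots n S) then Some true
  else None.

Definition action_slot t (a : action) : option (option node) :=
  match a with
  | Move x y => if odd t then (if x == Ctr then Some (Some y) else None)
                else (if y == Ctr then Some (Some x) else None)
  | Noop (At x) => if x == Ctr then Some None else None
  | Noop (Visited _) => None
  end.

Definition state_val n (S : state) (v : action * nat) : option bool :=
  let: (a, t) := v in
  if action_slot t a is Some o then
    (if opt_goal n o && (0 < t <= 2 * n - 2) then slot_val n S (uphalf t) o else Some false)
  else if a is Noop (Visited y) then
    (if is_goal n y && (2 <= t) then visited_val n S y t else Some false)
  else Some false.

Lemma action_slotK t a o : action_slot t a = Some o -> a = slot_action t o.
Proof.
case: a => [x y | [x | y]] //=; last by case: eqP => // -> [<-].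
by case: ifP => t_odd; case: eqP => // -> [<-] /=; rewrite t_odd.
Qed.

Lemma slot_actionK t o : action_slot t (slot_action t o) = Some o.
Proof. by case: o => [g|] //=; case: ifP => /= ->. Qed.

Lemma state_val_slot n S t o : opt_goal n o -> 0 < t <= 2 * n - 2 ->
  state_val n S (slot_action t o, t) = slot_val n S (uphalf t) o.
Proof. by move=> o_goal t_range; rewrite /state_val slot_actionK o_goal t_range. Qed.

Lemma state_val_visit n S y t : is_goal n y -> 2 <= t ->
  state_val n S (Noop (Visited y), t) = visited_val n S y t.
Proof. by move=> y_goal t2; rewrite /state_val /= y_goal t2. Qed.

Lemma state_val_cases n a t :
  [\/ exists2 o, a = slot_action t o & opt_goal n o && (0 < t <= 2 * n - 2),
      exists2 y, a = Noop (Visited y) & is_goal n y && (2 <= t) |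
      forall S, state_val n S (a, t) = Some false].
Proof.
case E: (action_slot t a) => [o|].
  case: (boolP (opt_goal n o && (0 < t <= 2 * n - 2))) => [cond | ncond].
    by apply: Or31; exists o; first exact: action_slotK.
  by apply: Or33 => S; rewrite /state_val E (negPf ncond).
case: a E => [x y | [x | y]] E; try by apply: Or33 => S; rewrite /state_val E.
case: (boolP (is_goal n y && (2 <= t))) => [cond | ncond]; first by apply: Or32; exists y.
by apply: Or33 => S; rewrite /state_val E (negPf ncond).
Qed.

Section States.
Variables (n : nat) (S : state).

Lemma mem_free_slots j : (j \in free_slots n S) = (0 < j < n) && (S j == None).
Proof. by rewrite mem_filter mem_iota andbC; congr (_ && _); lia. Qed.

Lemma free_slots_uniq : uniq (free_slots n S).
Proof. exact/filter_uniq/iota_uniq. Qed.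

Lemma size_free_slots : size (free_slots n S) <= n.-1.
Proof. by rewrite size_filter (leq_trans (count_size _ _)) ?size_iota. Qed.

Lemma goal_slot_some y j : goal_slot n S y = Some j -> S j = Some (Some y).
Proof.
rewrite /goal_slot; case E: filter => [|i s] //= [<-].
have : i \in [seq j <- iota 1 n.-1 | S j == Some (Some y)] by rewrite E mem_head.
by rewrite mem_filter => /andP [/eqP].
Qed.

Hypothesis S_wf : wf_state n S.

Lemma goal_slot_eq y j : S j = Some (Some y) -> goal_slot n S y = Some j.
Proof.
case: S_wf => range _ inj Sj; rewrite /goal_slot; case E: filter => [|i s] /=.
  have : j \in [seq j <- iota 1 n.-1 | S j == Some (Some y)].
    by have := range j; rewrite Sj => /(_ isT) jr; rewrite mem_filter Sj eqxx mem_iota; lia.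
  by rewrite E.
by congr Some; apply: inj (Sj); apply: goal_slot_some; rewrite /goal_slot E.
Qed.

End States.

Section Assign.
Variables (n : nat) (S : state) (j : nat) (o : option node).
Hypotheses (S_wf : wf_state n S) (j_free : j \in free_slots n S) (o_fresh : fresh n S o).

Lemma free_slots_assign : free_slots n (assign S j o) = rem j (free_slots n S).
Proof.
rewrite rem_filter ?free_slots_uniq // /free_slots -filter_predI.
by apply: eq_filter => i /=; rewrite /assign; case: (eqVneq i j).
Qed.

Lemma wf_assign : wf_state n (assign S j o).
Proof.
move: j_free; rewrite mem_free_slots => /andP [j_range /eqP Sj].
have o_new k y : o = Some y -> S k != Some (Some y).
  move=> oy; move: o_fresh; rewrite oy => /andP [_ /negP unmatched].
  by apply/eqP => /(goal_slot_eq S_wf) Sk; apply: unmatched; rewrite /matched Sk.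
case: S_wf => range goals inj; split.
- by move=> i; rewrite /assign; case: (eqVneq i j) => [-> | _]; [rewrite j_range | exact: range].
- move=> i o'; rewrite /assign; case: (eqVneq i j) => [_ [<-] | _]; last exact: goals.
  by move: o_fresh; case: (o) => [y /andP [] |].
- move=> i i' y; rewrite /assign.
  case: ifP => [/eqP -> | _]; case: ifP => [/eqP -> // | _].
  + by move=> [oy] Si'; move: (o_new i' _ oy); rewrite Si' eqxx.
  + by move=> Si [oy]; move: (o_new i _ oy); rewrite Si eqxx.
  + exact: inj.
Qed.

Lemma goal_slot_assign y :
  goal_slot n (assign S j o) y = if o == Some y then Some j else goal_slot n S y.
Proof.
case: eqP => [oy | o_ne]; first by apply: (goal_slot_eq wf_assign); rewrite /assign eqxx oy.
have /[!mem_free_slots] /andP [_ /eqP Sj] := j_free.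
rewrite /goal_slot; congr ohead; apply: eq_filter => i; rewrite /assign.
by case: (eqVneq i j) => [-> | //]; rewrite Sj; apply/negbTE/eqP => -[].
Qed.

Lemma matched_assign y : matched n (assign S j o) y = (o == Some y) || matched n S y.
Proof. by rewrite /matched goal_slot_assign; case: ifP. Qed.

Lemma slot_val_assign i o' b :
  slot_val n S i o' = Some b -> slot_val n (assign S j o) i o' = Some b.
Proof.
have /[!mem_free_slots] /andP [_ /eqP Sj] := j_free.
rewrite /slot_val /assign; case: (eqVneq i j) => [-> | _]; last first.
  case: (S i) => //; case: o' => // y.
  by rewrite matched_assign; case: (matched n S y) => // [<-]; rewrite orbT.
rewrite Sj; case: o' => // y; case: ifP => // y_matched [<-]; congr Some.
move: o_fresh; case: (o) => // y' /andP [_ y'_new].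
by apply: contraNF y'_new => /eqP [<-].
Qed.

Lemma visited_val_assign y t b : 1 < size (free_slots n S) ->
  visited_val n S y t = Some b -> visited_val n (assign S j o) y t = Some b.
Proof.
move=> free2; rewrite /visited_val goal_slot_assign free_slots_assign.
have all_rem P : all P (free_slots n S) -> all P (rem j (free_slots n S)).
  by move/allP=> P_all; apply/allP => i /mem_rem /P_all.
case: eqP => [oy | _].
  have -> : goal_slot n S y = None.
    by move: o_fresh; rewrite oy /= /matched negbK => /andP [_ /eqP].
  case: ifP => [/allP /(_ j j_free) jt [<-] | _]; first by rewrite leqNgt jt.
  by case: ifP => // /allP /(_ j j_free) jt [<-]; rewrite jt.
case: (goal_slot n S y) => // .
have [j' j'_in] : exists j', j' \in rem j (free_slots n S).
  case E: rem => [|j' s]; last by exists j'; rewrite mem_head.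
  by move: (size_rem j_free); rewrite E /=; lia.
case: ifP => [/all_rem -> // | _].
case: ifP => // /all_rem all_le [<-].
rewrite all_le ifN //; apply/allPn; exists j' => //.
by rewrite -leqNgt; apply: (allP all_le).
Qed.

Lemma state_val_assign v b : 1 < size (free_slots n S) ->
  state_val n S v = Some b -> state_val n (assign S j o) v = Some b.
Proof.
case: v => a t free2.
case: (state_val_cases n a t) =>
  [[o' -> /andP [o'_goal t_range]] | [y -> /andP [y_goal t2]] | fls].
- by rewrite !state_val_slot //; apply: slot_val_assign.
- by rewrite !state_val_visit //; apply: visited_val_assign.
- by rewrite !fls.
Qed.

End Assign.

Lemma exists_unmatched n S : wf_state n S -> exists2 y, is_goal n y & ~~ matched n S y.
Proof.
move=> S_wf.
case: (boolP (all (matched n S) (goal_nodes n))) => [all_m | /allPn [y]]; last first.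
  by rewrite mem_goal_nodes; exists y.
pose f y := odflt 0 (goal_slot n S y).
have f_slot y : y \in goal_nodes n -> S (f y) = Some (Some y).
  move=> y_in; move/allP: all_m => /(_ y y_in); rewrite /matched /f.
  by case E: (goal_slot n S y) => [k|] // _; exact: goal_slot_some E.
have f_uniq : uniq (map f (goal_nodes n)).
  rewrite map_inj_in_uniq ?goal_nodes_uniq // => y y' y_in y'_in fy.
  by move: (f_slot y y_in); rewrite fy f_slot // => -[].
have f_used : {subset map f (goal_nodes n) <= [seq k <- iota 1 n.-1 | S k != None]}.
  move=> _ /mapP [y /f_slot Sfy ->]; case: S_wf => range _ _.
  by have := range (f y); rewrite mem_filter mem_iota Sfy /= => /(_ isT); lia.
have := uniq_leq_size f_uniq f_used.
rewrite size_map size_goal_nodes size_filter => /leq_trans /(_ (count_size _ _)).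
by rewrite size_iota ltnn.
Qed.

Lemma slot_val_split n S j o b : wf_state n S -> S j = None -> opt_goal n o ->
  slot_val n S j o = None -> exists2 o', fresh n S o' & slot_val n (assign S j o') j o = Some b.
Proof.
move=> S_wf Sj o_goal o_undet.
have val_assign o' : slot_val n (assign S j o') j o = Some (o == o').
  by rewrite /slot_val /assign eqxx.
have o_fresh : fresh n S o.
  by move: o_undet; rewrite /slot_val Sj; case: o o_goal {val_assign} => // y /= ->; case: matched.
case: b; first by exists o; rewrite ?val_assign ?eqxx.
case: o o_fresh val_assign {o_goal o_undet} => [y _ | _] val_assign.
  by exists None; rewrite ?val_assign.
have [g g_goal g_new] := exists_unmatched S_wf.
by exists (Some g); rewrite /= ?g_goal ?val_assign.
Qed.

Lemma visited_val_split n S y t b : wf_state n S -> is_goal n y ->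
  visited_val n S y t = None ->
  fresh n S (Some y) /\
  exists2 j, j \in free_slots n S & visited_val n (assign S j (Some y)) y t = Some b.
Proof.
move=> S_wf y_goal; rewrite {1}/visited_val.
case E: (goal_slot n S y) => [k|] //.
case: ifP => // /negbT /allPn [j1 j1_free j1_t].
case: ifP => // /negbT /allPn [j2 j2_free j2_t] _.
have y_fresh : fresh n S (Some y) by rewrite /= y_goal /matched E.
have val_assign j : j \in free_slots n S ->
    visited_val n (assign S j (Some y)) y t = Some (j.*2 <= t).
  by move=> j_free; rewrite /visited_val (goal_slot_assign S_wf j_free y_fresh) eqxx.
split=> //; case: b; [exists j1 | exists j2]; rewrite ?val_assign //.
  by rewrite leqNgt j1_t.
by rewrite (negPf j2_t).
Qed.

Lemma state_val_split n S v b : wf_state n S -> state_val n S v = None ->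
  exists j o, [/\ j \in free_slots n S, fresh n S o & state_val n (assign S j o) v = Some b].
Proof.
case: v => a t S_wf.
case: (state_val_cases n a t) => [[o -> /andP [o_goal t_range]] | [y -> /andP [y_goal t2]] | fls];
  last by rewrite fls.
  rewrite state_val_slot // => o_undet.
  have Sj : S (uphalf t) = None by move: o_undet; rewrite /slot_val; case: (S _).
  have [o' o'_fresh o'_val] := slot_val_split b S_wf Sj o_goal o_undet.
  exists (uphalf t), o'; rewrite state_val_slot // mem_free_slots Sj eqxx andbT; split=> //.
  lia.
rewrite state_val_visit // => y_undet.
have [y_fresh [j j_free y_val]] := visited_val_split b S_wf y_goal y_undet.
by exists j, (Some y); rewrite state_val_visit.
Qed.

(** * Every clause keeps an unfalsified literal *)

Definition unfalsified n S (l : (action * nat) * bool) := state_val n S l.1 != Some (~~ l.2).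

Section Support.
Variables (n : nat) (S : state).
Hypotheses (n2 : 2 <= n) (S_wf : wf_state n S).

Lemma opt_goal_content j : opt_goal n (odflt None (S j)).
Proof. by case: S_wf => _ goals _; case E: (S j) => [o|] //; apply: goals E. Qed.

Lemma slot_val_content j : slot_val n S j (odflt None (S j)) != Some false.
Proof. by rewrite /slot_val; case: (S j) => [o|] //=; rewrite eqxx. Qed.

Lemma slot_val_true j o : slot_val n S j o = Some true -> S j = Some o.
Proof.
rewrite /slot_val; case: (S j) => [o' [/eqP -> //] |].
by case: o => // y; case: matched.
Qed.

Lemma goal_slot_range y j : goal_slot n S y = Some j -> 0 < j < n.
Proof. by case: S_wf => range _ _ /goal_slot_some Sj; apply: range; rewrite Sj. Qed.

Lemma state_val_true a t : state_val n S (a, t) = Some true ->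
  (exists2 o, a = slot_action t o & [/\ S (uphalf t) = Some o, opt_goal n o & 0 < t <= 2 * n - 2])
  \/ (exists2 y, a = Noop (Visited y) &
        [/\ is_goal n y, 2 <= t & visited_val n S y t = Some true]).
Proof.
case: (state_val_cases n a t) => [[o -> /andP [o_goal t_range]] | [y -> /andP [y_goal t2]] | fls].
- by rewrite state_val_slot // => /slot_val_true So; left; exists o.
- by rewrite state_val_visit // => y_val; right; exists y.
- by rewrite fls.
Qed.

Lemma visited_val_last y : 0 < size (free_slots n S) ->
  visited_val n S y (2 * n - 2) = Some true.
Proof.
move=> free1; rewrite /visited_val.
case E: (goal_slot n S y) => [j|]; first by move/goal_slot_range: E => j_range; congr Some; lia.
have free_le : all (fun j => j.*2 <= 2 * n - 2) (free_slots n S).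
  by apply/allP => j; rewrite mem_free_slots; lia.
rewrite free_le ifN //; case: (free_slots n S) free1 free_le => //= j s _ /andP [j_le _].
by rewrite ltnNge j_le.
Qed.

Lemma visited_val_early y t : 1 < size (free_slots n S) ->
  visited_val n S y t = Some true -> t <= 3 -> S 1 = Some (Some y).
Proof.
move=> free2; rewrite /visited_val.
case E: (goal_slot n S y) => [j|].
  move/goal_slot_range: (E) => j_range [j_t] t3.
  by rewrite -(goal_slot_some E); congr S; lia.
case: ifP => // _; case: ifP => // /allP free_le _ t3.
have : {subset free_slots n S <= [:: 1]}.
  by move=> j j_free; have := free_le j j_free; rewrite mem_free_slots in j_free; rewrite inE; lia.
by move/(uniq_leq_size (free_slots_uniq n S)) => /=; lia.
Qed.

Lemma visited_val_pred y t : visited_val n S y t = Some true ->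
  (2 < t /\ visited_val n S y t.-1 = Some true) \/
  (odd t.-1 /\ slot_val n S (uphalf t.-1) (Some y) != Some false).
Proof.
rewrite {1}/visited_val; case E: (goal_slot n S y) => [j|].
  move/goal_slot_range: (E) => j_range [j_t]; have [t_2j | t_ne] := eqVneq t j.*2.
    right; split; first lia.
    by rewrite /slot_val (_ : uphalf t.-1 = j) ?(goal_slot_some E) ?eqxx //; lia.
  by left; split; [lia | rewrite /visited_val E; congr Some; lia].
case: ifP => // /negbT /allPn [j0 j0_free j0_t]; case: ifP => // /allP free_le _.
case: (boolP (has (fun j => j.*2 == t) (free_slots n S))) =>
  [/hasP [j j_free /eqP j_t] | /hasPn no_eq].
  right; move: j_free; rewrite mem_free_slots => /andP [j_range /eqP Sj]; split; first lia.
  by rewrite /slot_val (_ : uphalf t.-1 = j) ?Sj /matched ?E //; lia.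
have free_lt : all (fun j => j.*2 <= t.-1) (free_slots n S).
  by apply/allP => j j_free; have := free_le j j_free; have := no_eq j j_free; lia.
have := free_le j0 j0_free; have := no_eq j0 j0_free; move: (j0_free).
rewrite mem_free_slots => /andP [j0_range _] j0_ne j0_le.
left; split; first lia.
by rewrite /visited_val E free_lt ifN //; apply/allPn; exists j0 => //; lia.
Qed.

Lemma achiever_lit p t a : a \in acts_at n t -> p \in map_add a ->
  state_val n S (a, t) != Some false ->
  has (unfalsified n S) [seq ((a', t), true) | a' <- acts_at n t & p \in map_add a'].
Proof.
move=> a_in p_add a_val; apply/hasP; exists ((a, t), true) => //.
by rewrite map_f // mem_filter p_add.
Qed.

Lemma pre_supported a t p : 2 <= t <= 2 * n - 2 -> p \in map_pre a ->
  state_val n S (a, t) = Some true ->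
  has (unfalsified n S) [seq ((a', t.-1), true) | a' <- acts_at n t.-1 & p \in map_add a'].
Proof.
move=> t_range p_pre /state_val_true a_true.
case: a_true p_pre => [[o -> [So o_goal _]] | [y -> [y_goal _ y_val]]] p_pre.
  pose o' := if odd t then odflt None (S (uphalf t.-1)) else o.
  have o'_goal : opt_goal n o' by rewrite /o'; case: ifP => _; rewrite ?opt_goal_content.
  apply: (@achiever_lit _ _ (slot_action t.-1 o')).
  - by apply: slot_action_in_graph => //; lia.
  - by apply: slot_action_pre_add p_pre; [lia | rewrite /o'; case: (odd t); rewrite ?eqxx].
  rewrite state_val_slot //; last lia.
  rewrite /o'; case: ifP => t_odd; first exact: slot_val_content.
  by rewrite (_ : uphalf t.-1 = uphalf t) ?/slot_val ?So ?eqxx //; lia.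
move: p_pre; rewrite inE => /eqP ->.
case: (visited_val_pred y_val) => [[t3 y_val'] | [t_odd y_slot]].
  apply: (@achiever_lit _ _ (Noop (Visited y))); rewrite ?inE //.
    by apply: visit_noop_in_graph => //; lia.
  by rewrite state_val_visit ?y_val' //; lia.
apply: (@achiever_lit _ _ (slot_action t.-1 (Some y))).
- by apply: slot_action_in_graph => //; lia.
- by rewrite /= t_odd !inE eqxx orbT.
- by rewrite state_val_slot //; lia.
Qed.

Hypothesis free2 : 1 < size (free_slots n S).

Lemma true_nonmutex a b t :
  state_val n S (a, t) = Some true -> state_val n S (b, t) = Some true -> ~~ mutex_at n t a b.
Proof.
move=> /state_val_true a_true /state_val_true b_true.
have mutex_neq : a = b -> ~~ mutex_at n t a b by move=> ->; rewrite /amutex_at /amutex eqxx.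
have early y : visited_val n S y t = Some true -> t <= 3 -> S 1 = Some (Some y).
  exact: visited_val_early.
have slot_visit o y : S (uphalf t) = Some o -> opt_goal n o -> is_goal n y -> 2 <= t ->
    visited_val n S y t = Some true ->
    ~~ mutex_at n t (slot_action t o) (Noop (Visited y)) /\
    ~~ mutex_at n t (Noop (Visited y)) (slot_action t o).
  move=> So o_goal y_goal t2 y_val; apply: slot_visit_nonmutex => //.
  case: (leqP 3 t) => // t_lt3; move: (early y y_val (ltnW t_lt3)).
  by rewrite (_ : 1 = uphalf t) ?So => [[->]|]; rewrite ?eqxx //; lia.
case: a_true mutex_neq => [[o -> [So o_goal _]] | [y -> [y_goal t2 y_val]]] mutex_neq;
  case: b_true mutex_neq => [[o' -> [So' o'_goal _]] | [y' -> [y'_goal t2' y'_val]]] mutex_neq.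
- by apply: mutex_neq; move: So'; rewrite So => -[->].
- by case: (slot_visit o y' So o_goal y'_goal t2' y'_val).
- by case: (slot_visit o' y So' o'_goal y_goal t2 y_val).
case: (leqP 4 t) => [t4 | t_lt4]; first exact: visit_visit_nonmutex.
have t3 : t <= 3 by lia.
by apply: mutex_neq; move: (early y y_val t3); rewrite (early y' y'_val t3) => -[->].
Qed.

Lemma clause_supported C : C \in MAP1 n -> has (unfalsified n S) C.
Proof.
rewrite /MAP1 /graphplan_cnf !mem_cat => /or3P [goal | pre | mutex].
- move: goal; rewrite map_goalsE => /mapP [_ /mapP [y /[!mem_goal_nodes] y_goal ->] ->].
  apply/hasP; exists ((Noop (Visited y), 2 * n - 2), true).
    by rewrite map_f // mem_filter inE eqxx visit_noop_in_graph //; lia.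
  by rewrite /unfalsified state_val_visit ?visited_val_last //; lia.
- move: pre => /flatten_mapP [t /[!mem_iota] t_range /flatten_mapP [a a_in /mapP [p p_pre ->]]].
  rewrite /= {1}/unfalsified /=.
  have [a_true | //] := eqVneq (state_val n S (a, t)) (Some true).
  by apply/orP; right; apply: pre_supported a_true; lia.
move: mutex => /flatten_mapP [t _ /flatten_mapP [a _ /mapP [b /[!mem_filter] /andP [ab _] ->]]].
rewrite /= /unfalsified /= orbF -negb_and; apply/negP => /andP [/eqP a_true /eqP b_true].
by move: ab; rewrite (negPf (true_nonmutex a_true b_true)).
Qed.

End Support.

Definition Good n (rho : passign (action * nat)%type) k := exists S : state,
  [/\ wf_state n S, {in rho, forall l, state_val n S l.1 = Some l.2} & k < size (free_slots n S)].

Lemma Good_consistent n rho k : Good n rho k.+1 -> ~~ conflict (MAP1 n) rho.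
Proof.
case=> S [S_wf agree free]; have n2 : 2 <= n by have := size_free_slots n S; lia.
apply/hasPn => C C_in; apply/negP => /allP C_false.
have /hasP [l l_in] := clause_supported n2 S_wf (leq_ltn_trans (ltn0Sn k) free) C_in.
by rewrite /unfalsified (agree _ (C_false l l_in)) eqxx.
Qed.

Lemma Good_branch n rho k v : Good n rho k.+1 -> ~~ assigned rho v ->
  (exists b, Good n ((v, b) :: rho) k.+1) \/ (forall b, Good n ((v, b) :: rho) k).
Proof.
case=> S [S_wf agree free] _; case E: (state_val n S v) => [b|].
  by left; exists b, S; split=> // l; rewrite inE => /predU1P [-> | /agree].
right=> b; have [j [o [j_free o_fresh val_b]]] := state_val_split b S_wf E.
exists (assign S j o); split; first exact: wf_assign.
  move=> l; rewrite inE => /predU1P [-> // | /agree].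
  by apply: state_val_assign => //; lia.
by rewrite free_slots_assign // size_rem // -ltnS (ltn_predK free).
Qed.

Lemma Good_init n : 2 <= n -> Good n [::] n.-2.
Proof.
move=> n2; exists (fun _ => None); split=> //.
by rewrite /free_slots filter_predT size_iota; lia.
Qed.

Theorem corollary1 :
  exists c : nat, 0 < c /\ exists N : nat,
    forall n : nat, 2 <= n -> N <= n ->
    forall t : dtree (action * nat)%type,
      DPLL_refutation (MAP1 n) t -> 2 ^ (n %/ c) <= dsize t.
Proof.
exists 2; split=> //; exists 6 => n n2 n6 t t_ref.
have G : Good n [::] (n - 3).+1 by rewrite (_ : (n - 3).+1 = n.-2); [exact: Good_init | lia].
apply: leq_trans (dpll_ref_Good_size (@Good_consistent n) (@Good_branch n) G t_ref).
by rewrite leq_exp2l //; lia.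
Qed.
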